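(* Let $F$ be a commutative field, $1\le h\le n-1$, and let $K$ be a linear complex of $h$-subspaces in $\mathrm{PG}(n,F)$. Then: (a) the partial map $\uparrow K:\Gamma(n,h-1,F)\to\mathrm{PG}(n,F)^*$ is a linear mapping with non-empty domain satisfying the null property $U\subseteq U^{\uparrow K}$ for all $U\in\mathbb D(\uparrow K)$ (i.e. it is a generalised null polarity); (b) the image of $\uparrow K$ spans a subspace of $\mathrm{PG}(n,F)^*$ of dimension at least $h$.
   Context: A $d$-subspace is a projective subspace of dimension $d$. Linear complex: with $N=\binom{n+1}{h+1}-1$ and Plücker embedding $\wp_{n,h}$ (sending the span of independent $v_0,\dots,v_h\in F^{n+1}$ to $F(v_0\wedge\cdots\wedge v_h)\in\mathrm{PG}(N,F)$, image the Grassmann variety $\mathcal G_{n,h}$), a linear complex of $h$-subspaces is the set of $h$-subspaces whose Plücker image lies in a fixed hyperplane of $\mathrm{PG}(N,F)$. Grassmannian $\Gamma(n,k,F)$: points are $k$-subspaces, lines are pencils $\{X: U\subset X\subset W,\dim X=k\}$ with $\dim U=k-1,\dim W=k+1$. $\mathrm{PG}(n,F)^*$ is the dual projective space. An $(h-1)$-subspace $U$ is singular for $K$ if every $h$-subspace containing $U$ lies in $K$; for non-singular $U$ there is a unique hyperplane $E$ (the polar hyperplane of $U$) such that an $h$-subspace $X\supseteq U$ belongs to $K$ iff $X\subseteq E$; $E$ is the union of the elements of $K$ containing $U$. The partial map $\uparrow K$ on $(h-1)$-subspaces has exceptional set the singular $(h-1)$-subspaces and sends each non-singular $U$ to its polar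 hyperplane. A partial map $\chi$ (defined on domain $\mathbb D(\chi)$, exceptional set $\mathbb A(\chi)$ = complement, $\phi^\chi=\{X^\chi:X\in\phi\cap\mathbb D(\chi)\}$) between semilinear spaces is a linear mapping if for each line $\ell$ exactly one holds: (i) $\ell^\chi$ is a line and $\chi$ maps $\ell$ bijectively onto it; (ii) $\ell^\chi$ is one point and $|\ell\cap\mathbb A(\chi)|=1$; (iii) $\ell\subseteq\mathbb A(\chi)$. *)

From HB Require Import structures.
From mathcomp Require Import all_boot all_order all_algebra.
From Stdlib Require Import ClassicalEpsilon.
Set Implicit Arguments. Unset Strict Implicit. Unset Printing Implicit Defensive.
Import GRing.Theory.
Local Open Scope ring_scope.

(* PG(n,F) is modelled on the vector space V = 'rV[F]_(n.+1) = F^(n+1).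
   A projective d-subspace is a vector subspace X : {vspace V} with
   \dim X = d+1. *)

Section Defs.
Variables (F : fieldType) (n h : nat).
Local Notation V := 'rV[F]_(n.+1).

Definition basis_mx (X : {vspace V}) : 'M[F]_(h.+1, n.+1) :=
  \matrix_(i < h.+1, j < n.+1) ((vbasis X)`_i) 0 j.

Definition set_enum (S : {set 'I_(n.+1)}) (k : 'I_(h.+1)) : 'I_(n.+1) :=
  nth ord0 (enum S) k.

Definition plucker_coord (X : {vspace V}) (S : {set 'I_(n.+1)}) : F :=
  \det (colsub (set_enum S) (basis_mx X)).

(* Value at the Plücker image of X of the linear form with coefficients c,
   i.e. of the hyperplane  sum_S c_S p_S = 0  of PG(N,F). *)
Definition plucker_form (c : {set 'I_(n.+1)} -> F) (X : {vspace V}) : F :=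
  \sum_(S : {set 'I_(n.+1)} | #|S| == h.+1) c S * plucker_coord X S.

Definition linear_complex (K : {vspace V} -> Prop) : Prop :=
  exists c : {set 'I_(n.+1)} -> F,
    (exists S : {set 'I_(n.+1)}, #|S| = h.+1 /\ c S != 0) /\
    forall X, K X <-> (\dim X = h.+1 /\ plucker_form c X = 0).

Definition singular (K : {vspace V} -> Prop) (U : {vspace V}) : Prop :=
  forall X : {vspace V}, \dim X = h.+1 -> (U <= X)%VS -> K X.

Definition is_polar (K : {vspace V} -> Prop) (U E : {vspace V}) : Prop :=
  \dim E = n /\
  forall X : {vspace V}, \dim X = h.+1 -> (U <= X)%VS -> (K X <-> (X <= E)%VS).

(* The partial map  up K : Gamma(n,h-1,F) -> PG(n,F)^*  (None = undefined).
   It is defined exactly on the non-singular (h-1)-subspaces, where it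
   returns the (paper: unique) polar hyperplane. *)
Definition upK (K : {vspace V} -> Prop) (U : {vspace V}) : option {vspace V} :=
  if excluded_middle_informative (\dim U = h /\ ~ singular K U)
  then Some (epsilon (inhabits 0%VS) (is_polar K U))
  else None.

(* Lines of the Grassmannian Gamma(n,h-1,F): pencils
   { X : U0 <= X <= W, dim X = h-1 (proj.) }, dim U0 = h-2, dim W = h (proj.). *)
Definition grass_line (l : {vspace V} -> Prop) : Prop :=
  exists U0 W : {vspace V}, \dim U0 = h.-1 /\ \dim W = h.+1 /\
    forall X, l X <-> (\dim X = h /\ (U0 <= X)%VS /\ (X <= W)%VS).

(* Lines of the dual space PG(n,F)^*: pencils of hyperplanes through
   an (n-2)-subspace Z. *)
Definition dual_line (l : {vspace V} -> Prop) : Prop :=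
  exists Z : {vspace V}, \dim Z = n.-1 /\
    forall E, l E <-> (\dim E = n /\ (Z <= E)%VS).

(* The subspaces of PG(n,F)^* are the stars of hyperplanes through a
   subspace Z; such a star has projective dimension n - \dim Z.
   "The image of chi spans a subspace of PG(n,F)^* of dimension >= d"
   means every subspace of PG(n,F)^* containing the image has dim >= d. *)
Definition dual_span_dim_ge (chi : {vspace V} -> option {vspace V}) (d : nat) : Prop :=
  forall Z : {vspace V},
    (forall U E, chi U = Some E -> (Z <= E)%VS) -> (d + \dim Z <= n)%N.

End Defs.

Definition exactly_one3 (P Q R : Prop) : Prop :=
  (P /\ ~ Q /\ ~ R) \/ (~ P /\ Q /\ ~ R) \/ (~ P /\ ~ Q /\ R).

Definition linear_mapping (T1 T2 : Type) (L1 : (T1 -> Prop) -> Prop)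
  (L2 : (T2 -> Prop) -> Prop) (chi : T1 -> option T2) : Prop :=
  forall l : T1 -> Prop, L1 l ->
    let img := fun y => exists x, l x /\ chi x = Some y in
    exactly_one3
      ((forall x, l x -> chi x <> None) /\
       (forall x1 x2, l x1 -> l x2 -> chi x1 = chi x2 -> x1 = x2) /\
       L2 img)
      ((exists y, forall y', img y' <-> y' = y) /\
       (exists x, (l x /\ chi x = None) /\
          forall x', l x' /\ chi x' = None -> x' = x))
      (forall x, l x -> chi x = None).

(* For an (h-1)-subspace U spanned by the rows of N, the map v |-> pform (col_mx v N)
   (the equation of the complex evaluated at the Plücker vector of U + <v>) is a linear
   form vanishing on U.  Its coefficient vector polarv N decides everything: U is
   singular iff polarv N = 0, and otherwise the polar hyperplane of U is its kernel.
   (a) Along a pencil U0 + <s a + t b> the polar vector is s A + t B by multilinearity of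
   pform, so the three cases of a linear mapping are A, B independent, A, B spanning a
   line, and A = B = 0.
   (b) If a subspace Z lies in every polar hyperplane, pform vanishes on matrices having a
   row in Z; replacing rows by their components in a complement of Z then kills pform
   altogether as soon as dim Z > n - h, contradicting pform (coord_mx S) = c S != 0.
   Taking Z the whole space also shows that some (h-1)-subspace is non-singular. *)

From Pilot Require Import Defs.
From mathcomp Require Import all_boot all_order all_algebra.
From mathcomp Require Import zify ring.
From mathcomp Require Import fingroup perm.
From Stdlib Require Import ClassicalEpsilon Classical.
Set Implicit Arguments. Unset Strict Implicit. Unset Printing Implicit Defensive.
Import GRing.Theory.
Local Open Scope ring_scope.

Section VspaceFacts.
Variables (K : fieldType) (vT : vectType K).
Implicit Types (U X H : {vspace vT}) (v y : vT).

Lemma dim_add_line U v : v \notin U -> \dim (U + <[v]>) = (\dim U).+1.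
Proof.
move=> vU; have v0 : v != 0 by apply: contraNneq vU => ->; rewrite mem0v.
rewrite dimv_disjoint_sum ?dim_vline ?v0 ?addn1 //; apply/eqP; rewrite -subv0.
apply/subvP => y /memv_capP [yU /vlineP [k ey]]; rewrite ey in yU *; rewrite memv0 scaler_eq0.
apply/orP; left; apply: contraNT vU => k0.
by rewrite -[v](scalerK k0) memvZ.
Qed.

Lemma exists_notin U X : (\dim U < \dim X)%N -> exists2 v, v \in X & v \notin U.
Proof. by move=> ltUX; apply/subvPn; apply: contraL ltUX => /dimvS; rewrite leqNgt. Qed.

Lemma subv_eq_dim U X : (U <= X)%VS -> (\dim X <= \dim U)%N -> U = X.
Proof. by move=> sUX leXU; apply/eqP; rewrite eqEdim sUX. Qed.

Lemma add_line_eq U X v : (U <= X)%VS -> v \in X -> v \notin U ->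
  \dim X = (\dim U).+1 -> (U + <[v]>)%VS = X.
Proof.
move=> sUX vX vU dX; apply: subv_eq_dim; first by rewrite subv_add sUX -memvE.
by rewrite dim_add_line // dX.
Qed.

Lemma exists_covering_subspace U H y : (U <= H)%VS -> (\dim U < \dim H)%N -> y \in H ->
  exists X, [/\ \dim X = (\dim U).+1, (U <= X)%VS, (X <= H)%VS & y \in X].
Proof.
move=> sUH ltUH yH; have addS z : z \in H -> (U + <[z]> <= H)%VS.
  by move=> zH; rewrite subv_add sUH -memvE.
case: (boolP (y \in U)) => yU.
  have [z zH zU] := exists_notin ltUH.
  by exists (U + <[z]>)%VS; rewrite dim_add_line ?addvSl ?addS ?(subvP (addvSl _ _)).
by exists (U + <[y]>)%VS; rewrite dim_add_line ?addvSl ?addS // memvE addvSr.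
Qed.

End VspaceFacts.

Section RowsIn.
Variables (F : fieldType) (p : nat).
Local Notation V := 'rV[F]_p.
Implicit Types (U X : {vspace V}) (v : V).

Definition rows_in m X (M : 'M[F]_(m, p)) := forall i, row i M \in X.

Definition vbasis_mx m X : 'M[F]_(m, p) := \matrix_(i, j) ((vbasis X)`_i) 0 j.

Lemma row_vbasis_mx m X i : row i (vbasis_mx m X) = (vbasis X)`_i.
Proof. by apply/rowP => j; rewrite !mxE. Qed.

Lemma rows_in_vbasis_mx m X : rows_in X (vbasis_mx m X).
Proof.
move=> i; rewrite row_vbasis_mx; case: (ltnP i (size (vbasis X))) => ltiX.
  exact/vbasis_mem/mem_nth.
by rewrite nth_default // mem0v.
Qed.

Lemma row_free_vbasis_mx k X : \dim X = k -> row_free (vbasis_mx k X).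
Proof.
move=> <-; apply: inj_row_free => u; rewrite mulmx_sum_row => u0; apply/rowP => i.
have /freeP freeX := basis_free (vbasisP X); rewrite mxE; apply: freeX.
by rewrite -[RHS]u0; apply: eq_bigr => j _; rewrite row_vbasis_mx.
Qed.

Lemma mulmx_rows_in m X (M : 'M_(m, p)) u : rows_in X M -> u *m M \in X.
Proof. by move=> rM; rewrite mulmx_sum_row; apply: memv_suml => i _; apply/memvZ/rM. Qed.

Lemma rows_in_mulmx m k X (M : 'M_(m, p)) :
  \dim X = k -> rows_in X M -> exists A : 'M_(m, k), M = A *m vbasis_mx k X.
Proof.
move=> <- rM; exists (\matrix_(i, j) coord (vbasis X) j (row i M)).
apply/row_matrixP => i; rewrite row_mul {1}(coord_vbasis (rM i)) mulmx_sum_row.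
by apply: eq_bigr => j _; rewrite row_vbasis_mx !mxE.
Qed.

Lemma row_free_rows_in m X (M : 'M_(m, p)) :
  rows_in X M -> row_free M -> (m <= \dim X)%N.
Proof.
move=> /(rows_in_mulmx erefl) [A ->] /eqP <-.
exact: leq_trans (mxrankM_maxl _ _) (rank_leq_col A).
Qed.

Lemma rows_in_col_mx m X v (N : 'M_(m, p)) :
  v \in X -> rows_in X N -> rows_in X (col_mx v N).
Proof.
move=> vX rN i; rewrite -[i]splitK; case: (split i) => k /=.
  by rewrite rowKu row_id.
by rewrite rowKd.
Qed.

Lemma row_free_col_mx m X v (N : 'M_(m, p)) :
  row_free N -> rows_in X N -> v \notin X -> row_free (col_mx v N).
Proof.
move=> fN rN vX; apply: inj_row_free => u; rewrite -[u]hsubmxK mul_row_col.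
rewrite [lsubmx u]mx11_scalar mul_scalar_mx; set a := lsubmx u 0 0 => u0.
have a0 : a = 0.
  apply: contraNeq vX => a0; rewrite -[v](scalerK a0) memvZ //.
  have -> : a *: v = - (rsubmx u *m N) by apply/eqP; rewrite -addr_eq0 u0.
  by rewrite rpredN mulmx_rows_in.
move: u0; rewrite a0 scale0r add0r => /eqP; rewrite mulmx_free_eq0 // => /eqP ->.
by rewrite raddf0 row_mx0.
Qed.

Lemma row_free_col_mxd m v (N : 'M_(m, p)) : row_free (col_mx v N) -> row_free N.
Proof.
move=> fvN; apply: inj_row_free => u uN; apply/eqP.
have := mulmx_free_eq0 (row_mx 0 u) fvN.
by rewrite mul_row_col uN mul0mx addr0 eqxx row_mx_eq0 eqxx.
Qed.

Definition rowspan m (M : 'M[F]_(m, p)) : {vspace V} := <<[tuple row i M | i < m]>>%VS.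

Lemma rows_in_rowspan m (M : 'M_(m, p)) : rows_in (rowspan M) M.
Proof.
by move=> i; apply: memv_span; have := mem_tnth i [tuple row i M | i < m]; rewrite tnth_mktuple.
Qed.

Lemma dim_rowspan m (M : 'M_(m, p)) : row_free M -> \dim (rowspan M) = m.
Proof.
move=> fM; suff /eqP : free [tuple row i M | i < m] by rewrite size_tuple.
apply/freeP => k k0 i.
have : (\row_j k j) *m M = 0.
  rewrite mulmx_sum_row -[RHS]k0; apply: eq_bigr => j _.
  by rewrite mxE -tnth_nth tnth_mktuple.
by move/eqP; rewrite mulmx_free_eq0 // => /eqP/rowP/(_ i); rewrite !mxE.
Qed.

End RowsIn.

Section Hyperplanes.
Variables (F : fieldType) (p : nat).
Local Notation V := 'rV[F]_p.
Implicit Types (w : 'cV[F]_p) (v : V).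

Definition hyperplane w : {vspace V} := lker (linfun (mulmxr w : V -> 'rV[F]_1)).

Lemma memv_hyperplane w v : (v \in hyperplane w) = ((v *m w) 0 0 == 0).
Proof.
rewrite memv_ker lfunE /=; apply/eqP/eqP => [-> | vw0]; first by rewrite mxE.
by apply/rowP => i; rewrite ord1 vw0 mxE.
Qed.

Lemma delta_mulmx w k : (delta_mx (0 : 'I_1) k *m w) 0 0 = w k 0.
Proof. by rewrite -rowE mxE. Qed.

Lemma dim_hyperplane w : w != 0 -> \dim (hyperplane w) = p.-1.
Proof.
case/matrix0Pn => k [z]; rewrite ord1 => wk0.
rewrite /hyperplane; set f := linfun _; have := limg_ker_dim f fullv.
rewrite capfv dimvf dim_matrix mul1r.
suff -> : \dim (f @: fullv) = 1%N by rewrite addn1 => /(congr1 predn).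
apply/eqP; rewrite eqn_leq; apply/andP; split.
  by have := dimvS (subvf (f @: fullv)); rewrite dimvf dim_matrix.
rewrite lt0n dimv_eq0; apply: contra_neq wk0 => f0.
have := memv_img f (memvf (delta_mx 0 k)); rewrite f0 memv0 lfunE /= => /eqP/rowP/(_ 0).
by rewrite delta_mulmx mxE.
Qed.

Lemma hyperplaneZ w t : t != 0 -> hyperplane (t *: w) = hyperplane w.
Proof.
move=> t0; apply/vspaceP => v.
by rewrite !memv_hyperplane -scalemxAr mxE mulf_eq0 (negbTE t0).
Qed.

Lemma mulmx_comb00 v s t w1 w2 :
  (v *m (s *: w1 + t *: w2)) 0 0 = s * (v *m w1) 0 0 + t * (v *m w2) 0 0.
Proof. by rewrite mulmxDr -!scalemxAr !mxE. Qed.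

Lemma hyperplane_cap w1 w2 a b :
  (hyperplane w1 :&: hyperplane w2 <= hyperplane (a *: w1 + b *: w2))%VS.
Proof.
apply/subvP => v /memv_capP []; rewrite !memv_hyperplane mulmx_comb00.
by move=> /eqP -> /eqP ->; rewrite !mulr0 addr0.
Qed.

Lemma hyperplaneS w1 w2 : w1 != 0 ->
  (hyperplane w1 <= hyperplane w2)%VS -> exists t, w2 = t *: w1.
Proof.
case/matrix0Pn => k [z]; rewrite ord1 => w1k sw12.
set e : V := delta_mx 0 k; exists (w2 k 0 / w1 k 0); apply/matrixP => j z'.
rewrite ord1 mxE; pose v := delta_mx 0 j - (w1 j 0 / w1 k 0) *: e.
have vw (w : 'cV_p) : (v *m w) 0 0 = w j 0 - w1 j 0 / w1 k 0 * w k 0.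
  rewrite -[w j 0](delta_mulmx _ j) -[w k 0](delta_mulmx _ k).
  by rewrite mulmxBl -scalemxAl !mxE.
have /(subvP sw12) : v \in hyperplane w1 by rewrite memv_hyperplane vw divfK ?subrr.
by rewrite memv_hyperplane vw subr_eq0 => /eqP ->; ring.
Qed.

End Hyperplanes.

Section HyperplanePencil.
Variables (F : fieldType) (p : nat) (w1 w2 : 'cV[F]_p).
Hypothesis indep12 : forall s t, s *: w1 + t *: w2 = 0 -> s = 0 /\ t = 0.

Lemma indep_comb_neq0 s t : (s != 0) || (t != 0) -> s *: w1 + t *: w2 != 0.
Proof. by apply: contraTneq => /indep12 [-> ->]; rewrite eqxx. Qed.

Lemma indep_hyperplane_neq : ~ (hyperplane w2 <= hyperplane w1)%VS.
Proof.
have w2_n0 : w2 != 0.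
  by have := @indep_comb_neq0 0 1; rewrite oner_eq0 orbT scale0r add0r scale1r; apply.
move=> /(hyperplaneS w2_n0) [r w1E]; have [] := indep12 (s := 1) (t := - r).
  by rewrite scale1r scaleNr w1E subrr.
by move/eqP; rewrite oner_eq0.
Qed.

Lemma dim_hyperplane_cap : (\dim (hyperplane w1 :&: hyperplane w2)).+2 = p.
Proof.
have nz_w (s t : F) : (s != 0) || (t != 0) -> \dim (hyperplane (s *: w1 + t *: w2)) = p.-1.
  by move=> nz_st; rewrite dim_hyperplane ?indep_comb_neq0.
have := nz_w 1 0; have := nz_w 0 1; rewrite oner_eq0 !eqxx /= !scale1r !scale0r addr0 add0r.
move=> /(_ isT) dimH2 /(_ isT) dimH1.
have dim_sum : \dim (hyperplane w1 + hyperplane w2) = p.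
  apply/eqP; rewrite eqn_leq; apply/andP; split.
    by have := dimvS (subvf (hyperplane w1 + hyperplane w2)); rewrite dimvf dim_matrix mul1r.
  rewrite leqNgt; apply/negP => lt_sum; apply: indep_hyperplane_neq.
  have -> : hyperplane w1 = (hyperplane w1 + hyperplane w2)%VS.
    by apply: subv_eq_dim; rewrite ?addvSl // dimH1; lia.
  exact: addvSr.
have : w1 != 0 by have := @indep_comb_neq0 1 0; rewrite oner_eq0 scale1r scale0r addr0; apply.
case/matrix0Pn => k _; have := ltn_ord k.
by have := dimv_sum_cap (hyperplane w1) (hyperplane w2); rewrite dim_sum dimH1 dimH2; lia.
Qed.

Lemma hyperplane_pencil E : \dim E = p.-1 -> (hyperplane w1 :&: hyperplane w2 <= E)%VS ->
  exists s t, ((s != 0) || (t != 0)) /\ E = hyperplane (s *: w1 + t *: w2).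
Proof.
move=> dimE sZE; have dimZ := dim_hyperplane_cap.
have ltZE : (\dim (hyperplane w1 :&: hyperplane w2) < \dim E)%N by rewrite dimE; lia.
have [e eE eZ] := exists_notin ltZE.
pose s := (e *m w2) 0 0; pose t := - (e *m w1) 0 0.
have nz_st : (s != 0) || (t != 0).
  apply: contraNT eZ; rewrite negb_or !negbK oppr_eq0 => /andP [/eqP s0 /eqP t0].
  by rewrite memv_cap !memv_hyperplane t0 -/s s0 eqxx.
exists s, t; split=> //; rewrite -(add_line_eq sZE eE eZ); last by rewrite dimE; lia.
apply: add_line_eq; rewrite ?hyperplane_cap ?dim_hyperplane ?indep_comb_neq0 //; last by lia.
by rewrite memv_hyperplane mulmx_comb00 mulNr mulrC subrr.
Qed.

End HyperplanePencil.

Lemma row0_col_mx (R : Type) m p (v : 'rV[R]_p) (N : 'M_(m, p)) :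
  row 0 (col_mx v N : 'M_(m.+1, p)) = v.
Proof.
by apply/rowP => j; rewrite mxE (_ : 0 = lshift m (0 : 'I_1)); [exact: col_mxEu | exact: ord_inj].
Qed.

Lemma row'0_col_mx (R : Type) m p (v : 'rV[R]_p) (N : 'M_(m, p)) :
  row' 0 (col_mx v N : 'M_(m.+1, p)) = N.
Proof.
apply/matrixP => i j; rewrite mxE (_ : lift 0 i = rshift 1 i); [exact: col_mxEd | exact: ord_inj].
Qed.

Lemma row'1_col_mx (R : Type) m p (v : 'rV[R]_p) (M : 'M_(m.+1, p)) :
  row' (lift 0 0) (col_mx v M : 'M_(m.+2, p)) = col_mx v (row' 0 M).
Proof.
apply/row_matrixP => i; rewrite row'Esub row_rowsub.
have [j -> | ->] := unliftP 0 i.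
  rewrite (_ : lift (lift 0 0) (lift 0 j) = lift 0 (lift 0 j)); last exact: ord_inj.
  by rewrite -!(row_rowsub (lift 0)) -!row'Esub !row'0_col_mx.
by rewrite (_ : lift (lift 0 0) 0 = 0) ?row0_col_mx //; exact: ord_inj.
Qed.

Section SetEnum.
Variables (n h : nat) (S : {set 'I_(n.+1)}).
Hypothesis cardS : #|S| = h.+1.

Lemma size_enum_set_enum : size (enum S) = h.+1.
Proof. by rewrite -cardE. Qed.

Lemma set_enum_inj : injective (@Defs.set_enum n h S).
Proof.
move=> i j eij; apply/ord_inj/eqP.
rewrite -(nth_uniq ord0 _ _ (enum_uniq (mem S))) ?size_enum_set_enum ?ltn_ord //.
exact/eqP.
Qed.

Lemma set_enum_mem k : @Defs.set_enum n h S k \in S.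
Proof. by rewrite -mem_enum mem_nth // size_enum_set_enum. Qed.

End SetEnum.

Section PluckerForm.
Variables (F : fieldType) (n h : nat) (c : {set 'I_(n.+1)} -> F).
Local Notation V := 'rV[F]_(n.+1).
Implicit Types (M : 'M[F]_(h.+1, n.+1)) (N : 'M[F]_(h, n.+1)) (v x y : V) (S T : {set 'I_(n.+1)}).

Definition pform M : F :=
  \sum_(S : {set 'I_(n.+1)} | #|S| == h.+1) c S * \det (colsub (Defs.set_enum S) M).

Lemma plucker_formE X : plucker_form h c X = pform (vbasis_mx h.+1 X).
Proof. by []. Qed.

Lemma pform_mulmx (A : 'M_(h.+1)) M : pform (A *m M) = \det A * pform M.
Proof.
rewrite /pform mulr_sumr; apply: eq_bigr => S _.
by rewrite -mulmx_colsub det_mulmx mulrCA.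
Qed.

Lemma pform_eq0 M : ~~ row_free M -> pform M = 0.
Proof.
move=> nfM; rewrite /pform big1 // => S _; apply/eqP; rewrite mulf_eq0.
apply/orP; right; apply: contraR nfM => d0.
have : colsub (Defs.set_enum S) M \in unitmx by rewrite unitmxE unitfE.
rewrite -row_free_unit -[M in colsub _ M]mulmx1 -mulmx_colsub /row_free => /eqP rk.
by rewrite eqn_leq rank_leq_row -{1}rk mxrankM_maxl.
Qed.

Lemma pform_multilinear M B C i b d :
    row i M = b *: row i B + d *: row i C -> row' i B = row' i M -> row' i C = row' i M ->
  pform M = b * pform B + d * pform C.
Proof.
move=> eM eB eC; rewrite /pform !mulr_sumr -big_split; apply: eq_bigr => S _.
set f := Defs.set_enum S.
suff -> : \det (colsub f M) = b * \det (colsub f B) + d * \det (colsub f C).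
  by rewrite mulrDr [c S * (b * _)]mulrCA [c S * (d * _)]mulrCA.
apply: determinant_multilinear.
- by apply/rowP => j; have /rowP/(_ (f j)) := eM; rewrite !mxE; apply.
- by apply/matrixP => a j; have /matrixP/(_ a (f j)) := eB; rewrite !mxE; apply.
- by apply/matrixP => a j; have /matrixP/(_ a (f j)) := eC; rewrite !mxE; apply.
Qed.

Lemma pform_col_mxDZ N a x y :
  pform (col_mx (a *: x + y) N) = a * pform (col_mx x N) + pform (col_mx y N).
Proof.
rewrite -[pform (col_mx y N)]mul1r; apply: (pform_multilinear (i := 0)).
- by rewrite !row0_col_mx scale1r.
- by rewrite !row'0_col_mx.
- by rewrite !row'0_col_mx.
Qed.

Definition polarv N : 'cV[F]_(n.+1) := \col_k pform (col_mx (delta_mx 0 k : V) N).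

Lemma pform_col_mxE v N : pform (col_mx v N) = (v *m polarv N) 0 0.
Proof.
have pform0 : pform (col_mx (0 : V) N) = 0.
  apply: (addrI (pform (col_mx (0 : V) N))).
  by rewrite addr0 -{1}[pform _]mul1r -pform_col_mxDZ scaler0 addr0.
rewrite {1}(row_sum_delta v) mxE; elim/big_rec2: _ => [|k y1 y2 _ IH] //.
by rewrite pform_col_mxDZ IH mxE.
Qed.

Lemma pform_eq0_rows_in X M : \dim X = h.+1 -> rows_in X M -> row_free M ->
  (pform M == 0) = (pform (vbasis_mx h.+1 X) == 0).
Proof.
move=> dX /(rows_in_mulmx dX) [A ->] fAB.
have : row_free A by rewrite /row_free eqn_leq rank_leq_row -{1}(eqP fAB) mxrankM_maxl.
by rewrite row_free_unit unitmxE unitfE pform_mulmx mulf_eq0 => /negbTE ->.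
Qed.

Definition coord_mx S : 'M[F]_(h.+1, n.+1) := \matrix_(i, j) (j == Defs.set_enum S i)%:R.

Lemma det_colsub_coord_mx T S : #|T| = h.+1 -> #|S| = h.+1 ->
  \det (colsub (Defs.set_enum T) (coord_mx S)) = (T == S)%:R.
Proof.
move=> cardT cardS; have [<- | neTS] := eqVneq T S.
  rewrite (_ : colsub _ _ = 1%:M) ?det1 //; apply/matrixP => i k.
  by rewrite !mxE (inj_eq (set_enum_inj cardT)) eq_sym.
have /subsetPn [t tT tS] : ~~ (T \subset S).
  by apply: contra neTS => sTS; rewrite eqEcard sTS cardT cardS /=.
have ti : (index t (enum T) < h.+1)%N by rewrite -(size_enum_set_enum cardT) index_mem mem_enum.
rewrite (expand_det_col _ (Ordinal ti)) big1 // => i _.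
rewrite !mxE /Defs.set_enum /= nth_index ?mem_enum //.
by rewrite (_ : t == _ = false) ?mul0r //; apply: contraNF tS => /eqP ->; exact: set_enum_mem.
Qed.

Lemma pform_coord_mx S : #|S| = h.+1 -> pform (coord_mx S) = c S.
Proof.
move=> cardS; rewrite /pform (bigD1 S) ?cardS //= det_colsub_coord_mx // eqxx mulr1.
rewrite big1 ?addr0 // => T /andP [/eqP cardT neTS].
by rewrite det_colsub_coord_mx // (negbTE neTS) mulr0.
Qed.

End PluckerForm.

Section Polar.
Variables (F : fieldType) (n h : nat) (c : {set 'I_(n.+1)} -> F).
Local Notation V := 'rV[F]_(n.+1).
Variable K : {vspace V} -> Prop.
Hypothesis complexK : forall X, K X <-> \dim X = h.+1 /\ plucker_form h c X = 0.
Hypothesis lt_hn : (h < n)%N.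
Variables (U : {vspace V}) (N : 'M[F]_(h, n.+1)).
Hypotheses (dimU : \dim U = h) (rowsN : rows_in U N) (freeN : row_free N).
Local Notation w := (polarv c N).

Lemma subv_hyperplane_polarv : (U <= hyperplane w)%VS.
Proof.
apply/subvP => u uU; rewrite memv_hyperplane -pform_col_mxE; apply/eqP/pform_eq0.
by apply/negP => /(row_free_rows_in (rows_in_col_mx uU rowsN)); rewrite dimU ltnn.
Qed.

Lemma complex_polarE X : \dim X = h.+1 -> (U <= X)%VS -> K X <-> (X <= hyperplane w)%VS.
Proof.
move=> dimX sUX; have ltUX : (\dim U < \dim X)%N by rewrite dimU dimX.
have [v vX vU] := exists_notin ltUX.
have -> : (X <= hyperplane w)%VS = (v \in hyperplane w).
  by rewrite -(add_line_eq sUX vX vU) ?dimU // subv_add subv_hyperplane_polarv -memvE.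
have rowsX : rows_in X N by move=> i; apply: subvP sUX _ (rowsN i).
rewrite complexK plucker_formE memv_hyperplane -pform_col_mxE.
rewrite (pform_eq0_rows_in _ dimX (rows_in_col_mx vX rowsX) (row_free_col_mx freeN rowsN vU)).
by split=> [[_ /eqP] | /eqP].
Qed.

Lemma singular_polarE : singular h K U <-> w = 0.
Proof.
split=> [singU | w0 X dimX sUX]; last first.
  apply/(complex_polarE dimX sUX)/subvP => x _.
  by rewrite memv_hyperplane w0 mulmx0 mxE.
apply/eqP; apply: contraT => w0.
have [v _ vH] : exists2 v, v \in fullv & v \notin hyperplane w.
  by apply: exists_notin; rewrite dimvf dim_matrix dim_hyperplane // mul1r.
have vU : v \notin U by apply: contra vH; apply: subvP subv_hyperplane_polarv v.
have dimX : \dim (U + <[v]>) = h.+1 by rewrite dim_add_line ?dimU.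
have vX : v \in (U + <[v]>)%VS by rewrite memvE addvSr.
have /(complex_polarE dimX (addvSl _ _)) := singU _ dimX (addvSl _ _).
by move=> /subvP/(_ v vX); rewrite (negbTE vH).
Qed.

Lemma polar_hyperplane : w != 0 -> is_polar h K U (hyperplane w).
Proof. by move=> w0; split=> [|X]; [rewrite dim_hyperplane | exact: complex_polarE]. Qed.

Lemma is_polar_unique E : w != 0 -> is_polar h K U E -> E = hyperplane w.
Proof.
move=> w0 [dimE polarE]; apply/esym/subv_eq_dim; last by rewrite dimE dim_hyperplane.
apply/subvP => y yH; have ltUH : (\dim U < \dim (hyperplane w))%N.
  by rewrite dimU dim_hyperplane.
have [X [dimX sUX sXH yX]] := exists_covering_subspace subv_hyperplane_polarv ltUH yH.
rewrite dimU in dimX; apply: subvP yX.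
by apply/(polarE X dimX sUX)/(complex_polarE dimX sUX).
Qed.

Lemma upK_polarv : upK h K U = if w == 0 then None else Some (hyperplane w).
Proof.
rewrite /upK; destruct excluded_middle_informative as [[dU nsingU] | singU]; case: eqP => w0 //.
- by case: nsingU; apply/singular_polarE.
- congr Some; apply: is_polar_unique; first exact/eqP.
  by apply: epsilon_spec; exists (hyperplane w); apply/polar_hyperplane/eqP.
- by case: singU; split=> // /singular_polarE.
Qed.

End Polar.

Lemma proportional_solutions (F : fieldType) (al be s t s0 t0 : F) :
    (al != 0) || (be != 0) -> (s != 0) || (t != 0) -> (s0 != 0) || (t0 != 0) ->
    s * al + t * be = 0 -> s0 * al + t0 * be = 0 ->
  exists2 r, r != 0 & s = r * s0 /\ t = r * t0.
Proof.
move=> nz_ab nz_st nz_st0 e1 e0.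
have [al0 | al_n0] := eqVneq al 0.
  move: nz_ab e1 e0; rewrite al0 eqxx /= !mulr0 !add0r => be0 /eqP + /eqP.
  rewrite !mulf_eq0 (negbTE be0) !orbF => /eqP t_0 /eqP t0_0.
  move: nz_st nz_st0; rewrite t_0 t0_0 eqxx !orbF => s_n0 s0_n0.
  by exists (s / s0); rewrite ?mulf_neq0 ?invr_eq0 ?divfK ?mulr0.
have sE : s = - (t * be) / al by apply: (mulIf al_n0); rewrite divfK // -(addr0_eq e1) opprK.
have s0E : s0 = - (t0 * be) / al by apply: (mulIf al_n0); rewrite divfK // -(addr0_eq e0) opprK.
have t0_n0 : t0 != 0.
  by apply: contraTneq nz_st0 => t0_0; rewrite s0E t0_0 mul0r oppr0 mul0r eqxx.
have t_n0 : t != 0 by apply: contraTneq nz_st => t_0; rewrite sE t_0 mul0r oppr0 mul0r eqxx.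
exists (t / t0); first by rewrite mulf_neq0 ?invr_eq0.
by rewrite divfK // sE s0E; split=> //; field; apply/andP.
Qed.

Section Pencil.
Variables (F : fieldType) (n h' : nat) (c : {set 'I_(n.+1)} -> F).
Local Notation h := h'.+1.
Local Notation V := 'rV[F]_(n.+1).
Variable K : {vspace V} -> Prop.
Hypothesis complexK : forall X, K X <-> \dim X = h.+1 /\ plucker_form h c X = 0.
Hypothesis lt_hn : (h < n)%N.
Variables (U0 : {vspace V}) (a b : V).
Hypotheses (dimU0 : \dim U0 = h') (aU0 : a \notin U0) (bU0a : b \notin (U0 + <[a]>)%VS).

Definition pencil_polarv (x : V) : 'cV[F]_(n.+1) := polarv c (col_mx x (vbasis_mx h' U0)).

Local Notation pt x := (U0 + <[x]>)%VS.
Local Notation comb s t := (s *: a + t *: b).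
Local Notation A := (pencil_polarv a).
Local Notation B := (pencil_polarv b).

Lemma pencil_polarv_lin s t x y :
  pencil_polarv (s *: x + t *: y) = s *: pencil_polarv x + t *: pencil_polarv y.
Proof.
apply/matrixP => k j; rewrite ord1 !mxE.
apply: (@pform_multilinear _ _ _ c _ _ _ (lift 0 0)); rewrite ?row'1_col_mx ?row'0_col_mx //.
by rewrite -!(row_rowsub (lift 0)) -!row'Esub !row'0_col_mx !row0_col_mx.
Qed.

Lemma upK_pencil_pt x : x \notin U0 ->
  upK h K (pt x) =
  if pencil_polarv x == 0 then None else Some (hyperplane (pencil_polarv x)).
Proof.
move=> xU0; have dimX : \dim (pt x) = h by rewrite dim_add_line ?dimU0.
have rowsN0 : rows_in (pt x) (vbasis_mx h' U0).
  by move=> i; apply: (subvP (addvSl U0 <[x]>)); exact: rows_in_vbasis_mx.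
have xX : x \in pt x by rewrite memvE addvSr.
apply: (upK_polarv complexK lt_hn dimX (rows_in_col_mx xX rowsN0)).
exact: row_free_col_mx (row_free_vbasis_mx dimU0) (rows_in_vbasis_mx U0) xU0.
Qed.

Lemma comb_notin s t : (s != 0) || (t != 0) -> comb s t \notin U0.
Proof.
move=> nz_st; apply/negP => stU0.
have [t0 | t_n0] := eqVneq t 0.
  move: nz_st stU0; rewrite t0 eqxx orbF scale0r addr0 => s_n0 saU0.
  by move/negP: aU0; apply; rewrite -[a](scalerK s_n0) memvZ.
move/negP: bU0a; apply; rewrite -[b](scalerK t_n0) -[t *: b](addKr (s *: a)).
apply: memvZ; apply: memvD; last exact: (subvP (addvSl U0 <[a]>)).
by rewrite memvN memvZ // memvE addvSr.
Qed.

Lemma pt_scale x r : x \notin U0 -> r != 0 -> pt (r *: x) = pt x.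
Proof.
move=> xU0 r_n0; apply: add_line_eq; rewrite ?addvSl ?dim_add_line //.
  by rewrite memvZ // memvE addvSr.
by apply: contra xU0; rewrite -{2}[x](scalerK r_n0) => /memvZ.
Qed.

Local Notation W := (U0 + <[a]> + <[b]>)%VS.
Variable l : {vspace V} -> Prop.
Hypothesis pencil_l : forall X, l X <-> \dim X = h /\ (U0 <= X)%VS /\ (X <= W)%VS.

Lemma comb_in_span s t : comb s t \in W.
Proof.
rewrite memvD // memvZ // memvE ?addvSr //.
by rewrite (subv_trans _ (addvSl _ <[b]>)) ?addvSr.
Qed.

Lemma pencil_pt_comb s t : (s != 0) || (t != 0) -> l (pt (comb s t)).
Proof.
move=> nz_st; apply/pencil_l; rewrite dim_add_line ?comb_notin ?dimU0 ?addvSl //.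
split=> //; split=> //; rewrite subv_add -memvE comb_in_span andbT.
exact: subv_trans (addvSl U0 <[a]>) (addvSl _ _).
Qed.

Lemma pencil_pt_a : l (pt a).
Proof. by have := @pencil_pt_comb 1 0; rewrite scale1r scale0r addr0 oner_eq0; apply. Qed.

Lemma pencil_coords X : l X -> exists s t, ((s != 0) || (t != 0)) /\ X = pt (comb s t).
Proof.
move=> /pencil_l [dimX [sU0X sXW]]; have ltU0X : (\dim U0 < \dim X)%N by rewrite dimX dimU0.
have [y yX yU0] := exists_notin ltU0X.
have /memv_addP [_ /memv_addP [u0 u0U0 [_ /vlineP [s ->] ->]] [_ /vlineP [t ->] ey]] :=
  subvP sXW y yX.
have combX : comb s t \in X.
  have -> : comb s t = y - u0 by rewrite ey -[u0 + _ + _]addrA [RHS]addrC addKr.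
  by rewrite memvB // (subvP sU0X).
have combU0 : comb s t \notin U0 by apply: contra yU0 => combU0; rewrite ey -addrA memvD.
exists s, t; split; last by apply/esym/add_line_eq; rewrite ?dimX ?dimU0.
apply: contraNT combU0; rewrite negb_or !negbK => /andP [/eqP -> /eqP ->].
by rewrite !scale0r addr0 mem0v.
Qed.

Lemma upK_pencil s t : (s != 0) || (t != 0) ->
  upK h K (pt (comb s t)) =
  if s *: A + t *: B == 0 then None else Some (hyperplane (s *: A + t *: B)).
Proof. by move=> nz_st; rewrite upK_pencil_pt ?comb_notin // pencil_polarv_lin. Qed.

Local Notation image := (fun E => exists X, l X /\ upK h K X = Some E).
Local Notation bijective_case := ((forall X, l X -> upK h K X <> None) /\
  (forall X1 X2, l X1 -> l X2 -> upK h K X1 = upK h K X2 -> X1 = X2) /\ dual_line image).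
Local Notation point_case := ((exists E, forall E', image E' <-> E' = E) /\
  (exists X, (l X /\ upK h K X = None) /\ forall X', l X' /\ upK h K X' = None -> X' = X)).
Local Notation undefined_case := (forall X, l X -> upK h K X = None).

Lemma pencil_undefined : A = 0 -> B = 0 ->
  exactly_one3 bijective_case point_case undefined_case.
Proof.
move=> A0 B0; have undef : undefined_case.
  by move=> X /pencil_coords [s [t [nz_st ->]]]; rewrite upK_pencil // A0 B0 !scaler0 addr0 eqxx.
right; right; split; [|split=> //].
  by case=> defd _; exact: defd _ pencil_pt_a (undef _ pencil_pt_a).
by case=> [[E /(_ E) [_ /(_ erefl) [X [/undef ->]]]]].
Qed.

Section Independent.
Hypothesis indepAB : forall s t, s *: A + t *: B = 0 -> s = 0 /\ t = 0.

Lemma upK_pencil_indep s t : (s != 0) || (t != 0) ->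
  upK h K (pt (comb s t)) = Some (hyperplane (s *: A + t *: B)).
Proof. by move=> nz_st; rewrite upK_pencil // (negbTE (indep_comb_neq0 indepAB nz_st)). Qed.

Lemma pencil_upK_inj X1 X2 : l X1 -> l X2 -> upK h K X1 = upK h K X2 -> X1 = X2.
Proof.
move=> /pencil_coords [s1 [t1 [nz1 ->]]] /pencil_coords [s2 [t2 [nz2 ->]]].
rewrite !upK_pencil_indep // => /(congr1 (odflt 0%VS)) /= eH.
have [r C2E] : exists r, s2 *: A + t2 *: B = r *: (s1 *: A + t1 *: B).
  by apply: hyperplaneS (indep_comb_neq0 indepAB nz1) _; rewrite eH.
have r_n0 : r != 0.
  by apply: contraTneq (indep_comb_neq0 indepAB nz2) => r0; rewrite C2E r0 scale0r eqxx.
have [/eqP + /eqP] : s2 - r * s1 = 0 /\ t2 - r * t1 = 0.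
  by apply: indepAB; rewrite !scalerBl addrACA -opprD C2E scalerDr !scalerA subrr.
rewrite !subr_eq0 => /eqP -> /eqP ->.
by rewrite -!scalerA -scalerDr pt_scale ?comb_notin.
Qed.

Lemma pencil_image_dual_line : dual_line image.
Proof.
exists (hyperplane A :&: hyperplane B)%VS; split.
  by have := dim_hyperplane_cap indepAB; lia.
move=> E; split=> [[_ [/pencil_coords [s [t [nz_st ->]]]]] | [dimE sZE]].
  rewrite upK_pencil_indep // => -[<-].
  by rewrite dim_hyperplane ?indep_comb_neq0 ?hyperplane_cap.
have [s [t [nz_st ->]]] := hyperplane_pencil indepAB dimE sZE.
by exists (pt (comb s t)); split; [exact: pencil_pt_comb | rewrite upK_pencil_indep].
Qed.

Lemma pencil_bijective : exactly_one3 bijective_case point_case undefined_case.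
Proof.
have defd X : l X -> upK h K X <> None.
  by move=> /pencil_coords [s [t [nz_st ->]]]; rewrite upK_pencil_indep.
left; split; first by split; [|split; [exact: pencil_upK_inj | exact: pencil_image_dual_line]].
split; first by case=> _ [X [[/defd]]].
by move=> undef; exact: defd _ pencil_pt_a (undef _ pencil_pt_a).
Qed.

End Independent.

Lemma pencil_point (D : 'cV[F]_(n.+1)) al be s0 t0 :
    D != 0 -> (al != 0) || (be != 0) -> A = al *: D -> B = be *: D ->
    (s0 != 0) || (t0 != 0) -> s0 *: A + t0 *: B = 0 ->
  exactly_one3 bijective_case point_case undefined_case.
Proof.
move=> D_n0 nz_ab AE BE nz0 C0.
have CE s t : s *: A + t *: B = (s * al + t * be) *: D by rewrite AE BE !scalerA scalerDl.
have k0 : s0 * al + t0 * be = 0.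
  by apply/eqP; move/eqP: C0; rewrite CE scaler_eq0 (negbTE D_n0) orbF.
have upKE s t : (s != 0) || (t != 0) -> upK h K (pt (comb s t)) =
    if s * al + t * be == 0 then None else Some (hyperplane D).
  move=> nz_st; rewrite upK_pencil // CE scaler_eq0 (negbTE D_n0) orbF.
  by case: eqP => // /eqP k_n0; rewrite hyperplaneZ.
have imgD : image (hyperplane D).
  have [s [t [nz_st k_n0]]] : exists s t, ((s != 0) || (t != 0)) /\ s * al + t * be != 0.
    have [al0 | al_n0] := eqVneq al 0; last by exists 1, 0; rewrite oner_eq0 mul1r mul0r addr0.
    move: nz_ab; rewrite al0 eqxx /= => be_n0.
    by exists 0, 1; rewrite oner_eq0 orbT mul0r add0r mul1r.
  by exists (pt (comb s t)); split; [exact: pencil_pt_comb | rewrite upKE // (negbTE k_n0)].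
right; left; split; [|split].
- by case=> defd _; apply: (defd _ (pencil_pt_comb nz0)); rewrite upKE // k0 eqxx.
- split.
    exists (hyperplane D) => E; split=> [[_ [/pencil_coords [s [t [nz_st ->]]]]] | ->] //.
    by rewrite upKE //; case: eqP => // _ [<-].
  exists (pt (comb s0 t0)); split.
    by split; [exact: pencil_pt_comb | rewrite upKE // k0 eqxx].
  move=> _ [/pencil_coords [s [t [nz_st ->]]]]; rewrite upKE //; case: eqP => [k_0 _ | //].
  have [r r_n0 [-> ->]] := proportional_solutions nz_ab nz_st nz0 k_0 k0.
  by rewrite -!scalerA -scalerDr pt_scale ?comb_notin.
- by have [X [lX]] := imgD; move=> + undef; rewrite undef.
Qed.

Lemma pencil_exactly_one : exactly_one3 bijective_case point_case undefined_case.
Proof.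
have [indepAB | depAB] := classic (forall s t, s *: A + t *: B = 0 -> s = 0 /\ t = 0).
  exact: pencil_bijective.
have [s0 [t0 [nz0 C0]]] : exists s0 t0, ((s0 != 0) || (t0 != 0)) /\ s0 *: A + t0 *: B = 0.
  apply: NNPP => nodep; apply: depAB => s t C0; apply: NNPP => nz_st; apply: nodep.
  exists s, t; split=> //; apply: contraT; rewrite negb_or !negbK => /andP [/eqP s0 /eqP t0].
  by case: nz_st.
have [A0 | A_n0] := eqVneq A 0.
  have [B0 | B_n0] := eqVneq B 0; first exact: pencil_undefined.
  by apply: (@pencil_point B 0 1 s0 t0); rewrite ?oner_eq0 ?orbT ?scale0r ?scale1r.
have t0_n0 : t0 != 0.
  apply: contraNneq A_n0 => t00; move: nz0 C0; rewrite t00 eqxx orbF scale0r addr0 => s0_n0 /eqP.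
  by rewrite scaler_eq0 (negbTE s0_n0) /= => /eqP ->.
apply: (@pencil_point A 1 (- (s0 / t0)) s0 t0); rewrite ?oner_eq0 ?scale1r //.
apply: (scalerI t0_n0); rewrite scalerA mulrN mulrCA mulfV // mulr1 scaleNr.
by apply/eqP; rewrite -addr_eq0 addrC C0.
Qed.

End Pencil.

Section Complex.
Variables (F : fieldType) (n h : nat) (c : {set 'I_(n.+1)} -> F).
Local Notation V := 'rV[F]_(n.+1).
Variable K : {vspace V} -> Prop.
Hypothesis complexK : forall X, K X <-> \dim X = h.+1 /\ plucker_form h c X = 0.
Hypothesis lt_hn : (h < n)%N.

Lemma upK_dim U E : upK h K U = Some E -> \dim U = h.
Proof. by rewrite /upK; destruct excluded_middle_informative as [[]|]. Qed.

Lemma upK_rowspan (N : 'M[F]_(h, n.+1)) : row_free N ->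
  upK h K (rowspan N) = if polarv c N == 0 then None else Some (hyperplane (polarv c N)).
Proof. by move=> freeN; apply: upK_polarv (dim_rowspan freeN) (rows_in_rowspan N) freeN. Qed.

Lemma upK_null U E : upK h K U = Some E -> (U <= E)%VS.
Proof.
move=> upKU; have dimU := upK_dim upKU.
have rowsU := @rows_in_vbasis_mx _ _ h U; have freeU := row_free_vbasis_mx dimU.
move: upKU; rewrite (upK_polarv complexK lt_hn dimU rowsU freeU).
by case: eqP => // _ [<-]; exact: subv_hyperplane_polarv.
Qed.

Section CommonSubspace.
Variable Z : {vspace V}.
Hypothesis sZ_upK : forall U E, upK h K U = Some E -> (Z <= E)%VS.

Lemma pform_col_mx_eq0 (N : 'M[F]_(h, n.+1)) z : z \in Z -> pform c (col_mx z N) = 0.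
Proof.
move=> zZ; have [freeN | /negP nfreeN] := boolP (row_free N); last first.
  by apply/pform_eq0/negP => /row_free_col_mxd.
rewrite pform_col_mxE; move: (upK_rowspan freeN); case: eqP => [-> _ | _].
  by rewrite mulmx0 mxE.
by move=> /sZ_upK/subvP/(_ z zZ); rewrite memv_hyperplane => /eqP.
Qed.

Lemma pform_row0_eq0 (M : 'M[F]_(h.+1, n.+1)) : row 0 M \in Z -> pform c M = 0.
Proof.
move=> rowZ; rewrite -[M](@vsubmxK _ 1 h) pform_col_mx_eq0 //.
rewrite (_ : usubmx _ = row 0 M) //.
by apply/rowP => j; rewrite !mxE; congr (M _ j); exact: ord_inj.
Qed.

Lemma pform_row_eq0 (M : 'M[F]_(h.+1, n.+1)) i : row i M \in Z -> pform c M = 0.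
Proof.
move=> rowZ; set s : 'S_(h.+1) := tperm 0 i.
have : pform c (perm_mx s *m M) = 0.
  apply: pform_row0_eq0; rewrite -row_permE (_ : row 0 _ = row i M) //.
  by apply/rowP => j; rewrite !mxE tpermL.
by rewrite pform_mulmx det_perm => /eqP; rewrite mulf_eq0 signr_eq0 => /eqP.
Qed.

Lemma pform_row_addZ (M M' : 'M[F]_(h.+1, n.+1)) i z : z \in Z ->
  row i M = row i M' + z -> row' i M = row' i M' -> pform c M = pform c M'.
Proof.
move=> zZ rowM row'M; pose C := \matrix_(a, j) if a == i then z 0 j else M a j.
have rowC : row i C = z by apply/rowP => j; rewrite !mxE eqxx.
have row'C : row' i C = row' i M.
  by apply/matrixP => a j; rewrite !mxE eq_sym (negbTE (neq_lift i a)).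
rewrite (@pform_multilinear _ _ _ c M M' C i 1 1) ?scale1r ?rowC //.
by rewrite (@pform_row_eq0 C i) ?rowC // mulr0 addr0 mul1r.
Qed.

(* Each step replaces a row by its component in Z^C, which changes pform by the value on
   a matrix with a row in Z; at the end all rows lie in Z^C, of dimension at most h. *)
Lemma pform_eq0_large (M : 'M[F]_(h.+1, n.+1)) : (n < h + \dim Z)%N -> pform c M = 0.
Proof.
move=> ltZ.
have /fin_all_exists [y yP] : forall i, exists y : V, y \in (Z^C)%VS /\ row i M - y \in Z.
  move=> i; have : row i M \in (Z + Z^C)%VS by rewrite addv_complf memvf.
  by case/memv_addP => z zZ [y yC ->]; exists y; rewrite addrK.
pose Mk k := \matrix_(a, j) if (a < k)%N then y a 0 j else M a j.
have pformMk k : (k <= h.+1)%N -> pform c M = pform c (Mk k).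
  elim: k => [_ | k IHk lt_kh]; first by congr pform; apply/matrixP => a j; rewrite mxE ltn0.
  pose i := Ordinal lt_kh; rewrite IHk ?(ltnW lt_kh) //.
  apply: (@pform_row_addZ (Mk k) (Mk k.+1) i _ (yP i).2).
    by apply/rowP => j; rewrite !mxE ltnn ltnSn addrC subrK.
  apply/matrixP => a j; rewrite !mxE (_ : (lift i a < k.+1)%N = (lift i a < k)%N) //.
  have /negbTE : lift i a != i by rewrite eq_sym neq_lift.
  by rewrite ltnS leq_eqVlt -val_eqE /= => ->.
have rowsC : rows_in (Z^C)%VS (Mk h.+1).
  by move=> i; rewrite (_ : row i _ = y i) ?(yP i).1 //; apply/rowP => j; rewrite !mxE ltn_ord.
rewrite (pformMk _ (leqnn _)); apply/pform_eq0/negP => /(row_free_rows_in rowsC).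
rewrite dimv_compl dimvf dim_matrix mul1r; lia.
Qed.

End CommonSubspace.
Lemma dual_span_upK (S : {set 'I_(n.+1)}) : #|S| = h.+1 -> c S != 0 -> dual_span_dim_ge (upK h K) h.
Proof.
move=> cardS cS_n0 Z sZ_upK; rewrite leqNgt; apply: contra cS_n0 => ltZ.
by rewrite -(pform_coord_mx c cardS) (pform_eq0_large sZ_upK).
Qed.

Lemma upK_defined (S : {set 'I_(n.+1)}) : #|S| = h.+1 -> c S != 0 -> exists U, upK h K U <> None.
Proof.
move=> cardS cS_n0; apply: NNPP => undef.
have := dual_span_upK cardS cS_n0 (Z := fullv); rewrite dimvf dim_matrix mul1r.
suff /[swap]/[apply] : forall U E, upK h K U = Some E -> (fullv <= E)%VS by lia.
by move=> U E upKU; case: undef; exists U; rewrite upKU.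
Qed.

End Complex.

Lemma upK_linear_mapping (F : fieldType) (n h' : nat) (c : {set 'I_(n.+1)} -> F)
    (K : {vspace 'rV[F]_(n.+1)} -> Prop) :
    (forall X, K X <-> \dim X = h'.+2 /\ plucker_form h'.+1 c X = 0) -> (h'.+1 < n)%N ->
  linear_mapping (grass_line h'.+1) (dual_line (n:=n)) (upK h'.+1 K).
Proof.
move=> complexK lt_hn l [U0 [W [dimU0 [dimW pencil_l]]]] /=.
have [sU0W | nsU0W] := boolP (U0 <= W)%VS; last first.
  have nol X : ~ l X by move=> /pencil_l [_ [sU0X sXW]]; case/negP: nsU0W; exact: subv_trans sXW.
  right; right; split; last split; last by move=> X /nol.
    move=> [_ [_ [Z [dimZ imageZ]]]].
    have ltZ : (\dim Z < \dim (fullv : {vspace 'rV[F]_(n.+1)}))%N.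
      by rewrite dimZ dimvf dim_matrix mul1r; lia.
    have [e _ eZ] := exists_notin ltZ.
    have dimZe : \dim (Z + <[e]>) = n by rewrite dim_add_line // dimZ; lia.
    by have [X [/nol]] := (imageZ (Z + <[e]>)%VS).2 (conj dimZe (addvSl _ _)).
  by case=> [[E /(_ E) [_ /(_ erefl) [X [/nol]]]]].
have [a aW aU0] : exists2 a, a \in W & a \notin U0 by apply: exists_notin; rewrite dimU0 dimW.
have dimU0a : \dim (U0 + <[a]>) = h'.+1 by rewrite dim_add_line // dimU0.
have [b bW bU0a] : exists2 b, b \in W & b \notin (U0 + <[a]>)%VS.
  by apply: exists_notin; rewrite dimU0a dimW.
have WE : W = (U0 + <[a]> + <[b]>)%VS.
  by apply/esym/add_line_eq; rewrite // ?dimU0a // subv_add sU0W -memvE.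
by apply: (pencil_exactly_one complexK lt_hn dimU0 aU0 bU0a) => X; rewrite pencil_l WE.
Qed.

Theorem theorem5p3 (F : fieldType) (n h : nat) (K : {vspace 'rV[F]_(n.+1)} -> Prop) :
  (1 <= h)%N -> (h <= n.-1)%N -> linear_complex h K ->
  (linear_mapping (grass_line h) (dual_line (n:=n)) (upK h K) /\
   (exists U, upK h K U <> None) /\
   (forall U E, upK h K U = Some E -> (U <= E)%VS)) /\
  dual_span_dim_ge (upK h K) h.
Proof.
case: h => [//|h'] _ le_hn [c [[S [cardS cS_n0]] complexK]].
have lt_hn : (h'.+1 < n)%N by lia.
split; last exact (dual_span_upK complexK lt_hn cardS cS_n0).
split; first exact: upK_linear_mapping complexK lt_hn.
split; first exact (upK_defined complexK lt_hn cardS cS_n0).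
exact: upK_null complexK lt_hn.
Qed.
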